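(* Let $V$ be an $R$-module that is a Whittaker module of type $\eta$, with cyclic Whittaker vector $w$. Then \[ R_w = R Z_V + R R_\eta(E). \]
   Context: Let $f\in\mathbb{C}[H]$ be a polynomial. $R=R(f)$ is the associative $\mathbb{C}$-algebra generated by $E,F,H$ with relations $EF-FE=f(H)$, $HE-EH=E$, $HF-FH=-F$; the monomials $F^iH^jE^k$ ($i,j,k\ge 0$) form a $\mathbb{C}$-basis of $R$. Let $R(E)=\mathbb{C}[E]$ be the subalgebra generated by $E$. Let $u\in\mathbb{C}[H]$ satisfy $f(H)=\tfrac12(u(H+1)-u(H))$ and $\Omega=2FE+u(H+1)$; the center $Z=Z(R)$ is the polynomial ring $\mathbb{C}[\Omega]$. Fix an algebra homomorphism $\eta:R(E)\to\mathbb{C}$ with $\eta(E)\neq 0$, and let $R_\eta(E)=\ker\eta$. A vector $v$ of an $R$-module $V$ is a Whittaker vector (of type $\eta$) if $Ev=\eta(E)v$; $V$ is a Whittaker module of type $\eta$ if $V=Rv$ for some Whittaker vector $v$ (a cyclic Whittaker vector). For an $R$-module $V$, $Z_V=\mathrm{Ann}_R(V)\cap Z(R)$, and for $w\in V$, $R_w=\mathrm{Ann}_R(w)=\{r\in R: rw=0\}$. *)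

From HB Require Import structures.
From mathcomp Require Import all_boot all_order all_algebra.
From mathcomp Require Import complex.
From mathcomp Require Import Rstruct.
Set Implicit Arguments. Unset Strict Implicit. Unset Printing Implicit Defensive.
Import Order.TTheory GRing.Theory Num.Theory.
Local Open Scope ring_scope.

Definition CC : Type := complex Rdefinitions.R.
Definition CC_numClosedField : numClosedFieldType := CC.

Section Defs.
Variable A : algType CC_numClosedField.

Definition PBW_basis (E F H : A) : Prop :=
  (forall a : A, exists (n : nat) (c : nat -> nat -> nat -> CC_numClosedField),
     a = \sum_(i < n) \sum_(j < n) \sum_(k < n)
           c i j k *: (F ^+ i * H ^+ j * E ^+ k)) /\
  (forall (n : nat) (c : nat -> nat -> nat -> CC_numClosedField),
     \sum_(i < n) \sum_(j < n) \sum_(k < n)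
           c i j k *: (F ^+ i * H ^+ j * E ^+ k) = 0 ->
     forall i j k, (i < n)%N -> (j < n)%N -> (k < n)%N -> c i j k = 0).

(* A is (isomorphic to) the algebra R(f): generated by E,F,H with the
   defining relations, the PBW monomials being a basis. *)
Definition is_Rf (f : {poly CC_numClosedField}) (E F H : A) : Prop :=
  [/\ E * F - F * E = horner_alg H f,
      H * E - E * H = E,
      H * F - F * H = - F
    & PBW_basis E F H].

Definition is_module (V : lmodType CC_numClosedField) (act : A -> V -> V) : Prop :=
  [/\ forall a b v, act (a + b) v = act a v + act b v,
      forall a v w, act a (v + w) = act a v + act a w,
      forall a b v, act (a * b) v = act a (act b v),
      forall v, act 1 v = v
    & forall (c : CC_numClosedField) a v, act (c *: a) v = c *: act a v].

Definition center (z : A) : Prop := forall r : A, r * z = z * r.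

Definition annV (V : lmodType CC_numClosedField) (act : A -> V -> V) (r : A) : Prop :=
  forall v, act r v = 0.

Definition Z_V (V : lmodType CC_numClosedField) (act : A -> V -> V) (z : A) : Prop :=
  annV act z /\ center z.

(* R_eta(E) = ker eta, where eta : C[E] -> C is the algebra homomorphism
   with eta(E) = a; i.e. the elements p(E) with p(a) = 0. *)
Definition ker_eta (E : A) (a : CC_numClosedField) (x : A) : Prop :=
  exists p : {poly CC_numClosedField}, p.[a] = 0 /\ x = horner_alg E p.

Definition left_ideal (S : A -> Prop) (x : A) : Prop :=
  exists (n : nat) (r s : nat -> A),
    (forall i, (i < n)%N -> S (s i)) /\ x = \sum_(i < n) r i * s i.

Definition ann_vec (V : lmodType CC_numClosedField) (act : A -> V -> V) (w : V) (r : A) : Prop :=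
  act r w = 0.

End Defs.

(* Modulo the left ideal A ker(eta), every element of A = R(f) is congruent to
   an element of Z(A)[H]: there E = a on PBW monomials, and
   z g(H) F = a^-1 z g(H) F E, where 2 F E = Omega - q(H) for the central
   Casimir element Omega = 2 F E + q(H), q being a backward antidifference of
   2 f.  It remains to see which y = sum_j z_j (H)_j, with (H)_j the rising
   factorial H (H + 1) ... (H + j - 1) and z_j central, annihilate w.  As
   E w = a w, left multiplication by E - a acts on y w as -a times the backward
   difference in H, and (X)_(j+1) - (X - 1)_(j+1) = (j + 1) (X)_j; descending
   on j shows z_j w = 0 for every j, so by cyclicity each z_j lies in Z_V. *)

From mathcomp Require Import all_boot all_order all_algebra.
Import GRing.Theory Num.Theory.
Local Open Scope ring_scope.
Set Implicit Arguments. Unset Strict Implicit. Unset Printing Implicit Defensive.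

Section Rising.
Variable R : numFieldType.
Implicit Types p q : {poly R}.

Definition rising (j : nat) : {poly R} := \prod_(i < j) ('X + i%:R%:P).

Lemma rising0 : rising 0 = 1.
Proof. by rewrite /rising big_ord0. Qed.

Lemma risingS j : rising j.+1 = rising j * ('X + j%:R%:P).
Proof. by rewrite /rising big_ord_recr. Qed.

Lemma rising_monic j : rising j \is monic.
Proof. by apply: monic_prod => i _; apply: monicXaddC. Qed.

Lemma size_rising j : size (rising j) = j.+1.
Proof.
elim: j => [|j IH]; first by rewrite rising0 size_poly1.
rewrite risingS size_monicM ?rising_monic ?monic_neq0 ?monicXaddC //.
by rewrite IH size_XaddC addn2.
Qed.

Lemma rising_span n p : (size p <= n)%N ->
  exists c : nat -> R, p = \sum_(j < n) c j *: rising j.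
Proof.
elim: n p => [|n IH] p hp.
  by exists (fun=> 0); rewrite big_ord0; apply/eqP; rewrite -size_poly_eq0 -leqn0.
have [|c hc] := IH (p - p`_n *: rising n).
  apply/leq_sizeP => j hj; rewrite coefB coefZ.
  case: (ltngtP j n) hj => // [hnj _|-> _]; last first.
    have := monicP (rising_monic n); rewrite lead_coefE size_rising => ->.
    by rewrite mulr1 subrr.
  by rewrite (nth_default _ (leq_trans hp hnj)) [(rising n)`_j]nth_default
    ?size_rising ?mulr0 ?subr0.
exists (fun j => if j == n then p`_n else c j).
rewrite big_ord_recr /= eqxx -[LHS](subrK (p`_n *: rising n)) hc; congr (_ + _).
by apply: eq_bigr => i _; rewrite ltn_eqF.
Qed.

Definition bdiff p := p - (p \Po ('X - 1)).

Lemma bdiffC c : bdiff c%:P = 0.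
Proof. by rewrite /bdiff comp_polyC subrr. Qed.

Lemma rising_comp_XsubC j : rising j.+1 \Po ('X - 1) = ('X - 1) * rising j.
Proof.
rewrite /rising rmorph_prod big_ord_recl /= comp_polyD comp_polyX comp_polyC addr0.
congr (_ * _); apply: eq_bigr => i _.
rewrite comp_polyD comp_polyX comp_polyC /bump /= add1n -natr1 polyCD polyC1.
by rewrite -addrA [_%:P + 1]addrC addKr.
Qed.

Lemma bdiff_rising j : bdiff (rising j.+1) = j.+1%:R *: rising j.
Proof.
rewrite /bdiff rising_comp_XsubC risingS mulrC -mulrBl opprB addrC addrA subrK.
by rewrite -mul_polyC -nat1r polyCD polyC1.
Qed.

Lemma backward_antidifference p : exists q, bdiff q = p.
Proof.
have [c ->] := rising_span (leqnn (size p)).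
exists (\sum_(j < size p) (c j / j.+1%:R) *: rising j.+1).
rewrite /bdiff linear_sum /= -sumrB; apply: eq_bigr => j _.
by rewrite linearZ /= -scalerBr -/(bdiff _) bdiff_rising scalerA divfK ?pnatr_eq0.
Qed.

Lemma bdiff_comp_XaddC p : bdiff p \Po ('X + 1) = p \Po ('X + 1) - p.
Proof.
by rewrite linearB /= -comp_polyA comp_polyB comp_polyX comp_polyC polyC1 addrK comp_polyXr.
Qed.

End Rising.

Arguments rising {R} j.

Section HornerShift.
Variables (R : comNzRingType) (A : algType R).

Lemma horner_alg_shift (x h : A) (d : R) p : h * x - x * h = d *: x ->
  x * horner_alg h p = horner_alg h (p \Po ('X - d%:P)) * x.
Proof.
move=> hx; have xh : x * h = (h - d%:A) * x.
  by rewrite mulrBl mulr_algl -hx opprB addrC subrK.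
elim/poly_ind: p => [|p c IH]; first by rewrite linear0 !rmorph0 mulr0 mul0r.
rewrite comp_polyD comp_polyM comp_polyX comp_polyC !rmorphD !rmorphM !rmorphB /=.
rewrite !horner_algX !horner_algC mulrDr mulrA IH -mulrA xh mulrA mulrDl.
by rewrite mulr_algl mulr_algr.
Qed.

Lemma horner_alg_comm (h : A) p : h * horner_alg h p = horner_alg h p * h.
Proof.
have hh : h * h - h * h = 0 *: h by rewrite subrr scale0r.
by rewrite (horner_alg_shift p hh) polyC0 subr0 comp_polyXr.
Qed.

End HornerShift.

Local Notation C := CC_numClosedField.

Section Center.
Variable A : algType C.
Implicit Types x y z : A.

Lemma center0 : center (0 : A).
Proof. by move=> r; rewrite mulr0 mul0r. Qed.

Lemma center1 : center (1 : A).
Proof. by move=> r; rewrite mulr1 mul1r. Qed.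

Lemma centerD x y : center x -> center y -> center (x + y).
Proof. by move=> cx cy r; rewrite mulrDr mulrDl cx cy. Qed.

Lemma centerM x y : center x -> center y -> center (x * y).
Proof. by move=> cx cy r; rewrite mulrA cx -mulrA cy mulrA. Qed.

Lemma centerZ c x : center x -> center (c *: x).
Proof. by move=> cx r; rewrite -scalerAr -scalerAl cx. Qed.

Lemma center_scalar c : center (c%:A : A).
Proof. exact/centerZ/center1. Qed.

End Center.

Section LeftIdeal.
Variables (A : algType C) (S : A -> Prop).

Lemma left_ideal0 : left_ideal S 0.
Proof. by exists 0%N, (fun=> 0), (fun=> 0); rewrite big_ord0. Qed.

Lemma left_ideal_mem r s : S s -> left_ideal S (r * s).
Proof. by move=> Ss; exists 1%N, (fun=> r), (fun=> s); rewrite big_ord1. Qed.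

Lemma left_idealD x y : left_ideal S x -> left_ideal S y -> left_ideal S (x + y).
Proof.
move=> [n1 [r1 [s1 [S1 ->]]]] [n2 [r2 [s2 [S2 ->]]]].
exists (n1 + n2)%N, (fun i => if (i < n1)%N then r1 i else r2 (i - n1)%N),
  (fun i => if (i < n1)%N then s1 i else s2 (i - n1)%N); split.
  move=> i lti; case: ifPn => [/S1 // | ]; rewrite -leqNgt => le_n1i.
  by apply: S2; rewrite ltn_subLR.
rewrite big_split_ord; congr (_ + _); apply: eq_bigr => i _ /=.
  by rewrite ltn_ord.
by rewrite ltnNge leq_addr addKn.
Qed.

Lemma left_idealMl t x : left_ideal S x -> left_ideal S (t * x).
Proof.
move=> [n [r [s [Ss ->]]]]; exists n, (fun i => t * r i), s; split => //.
by rewrite mulr_sumr; apply: eq_bigr => i _; rewrite mulrA.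
Qed.

End LeftIdeal.

Section CentralPolynomials.
Variables (A : algType C) (H : A).
Local Notation ev := (horner_alg H).

Definition in_ZH (x : A) : Prop := exists n (z : nat -> A),
  (forall j, center (z j)) /\ x = \sum_(j < n) z j * ev (rising j).

Lemma in_ZH0 : in_ZH 0.
Proof. by exists 0%N, (fun=> 0); split=> [j|]; [exact: center0 | rewrite big_ord0]. Qed.

Lemma in_ZH_widen n m (z : nat -> A) : (n <= m)%N ->
  \sum_(j < n) z j * ev (rising j)
  = \sum_(j < m) (if (j < n)%N then z j else 0) * ev (rising j).
Proof.
move=> le_nm; rewrite (big_ord_widen m (fun j => z j * ev (rising j)) le_nm) big_mkcond /=.
by apply: eq_bigr => j _; case: ifP; rewrite ?mul0r.
Qed.

Lemma in_ZHD x y : in_ZH x -> in_ZH y -> in_ZH (x + y).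
Proof.
move=> [n [z [cz ->]]] [m [z' [cz' ->]]].
exists (maxn n m), (fun j => (if (j < n)%N then z j else 0) + if (j < m)%N then z' j else 0).
split=> [j|]; first by apply: centerD; case: ifP => _;
  [exact: cz | exact: center0 | exact: cz' | exact: center0].
rewrite (in_ZH_widen _ (leq_maxl n m)) (in_ZH_widen _ (leq_maxr n m)) -big_split.
by apply: eq_bigr => j _; rewrite mulrDl.
Qed.

Lemma in_ZH_sum n (g : 'I_n -> A) : (forall i, in_ZH (g i)) -> in_ZH (\sum_i g i).
Proof. by move=> Zg; apply: big_ind => //; [exact: in_ZH0 | exact: in_ZHD]. Qed.

Lemma in_ZH_center_ev z p : center z -> in_ZH (z * ev p).
Proof.
move=> cz; have [c ->] := rising_span (leqnn (size p)).
exists (size p), (fun j => c j *: z); split=> [j|]; first exact: centerZ.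
rewrite linear_sum mulr_sumr; apply: eq_bigr => j _.
by rewrite linearZ /= mulr_algl -scalerAl -scalerAr.
Qed.

Lemma in_ZHMl_center z x : center z -> in_ZH x -> in_ZH (z * x).
Proof.
move=> cz [n [z' [cz' ->]]]; exists n, (fun j => z * z' j).
split=> [j|]; first exact: centerM.
by rewrite mulr_sumr; apply: eq_bigr => j _; rewrite mulrA.
Qed.

Lemma in_ZHMl_ev p x : in_ZH x -> in_ZH (ev p * x).
Proof.
move=> [n [z [cz ->]]]; rewrite mulr_sumr; apply: in_ZH_sum => j.
by rewrite mulrA cz -mulrA -rmorphM; apply: in_ZH_center_ev.
Qed.

End CentralPolynomials.

Section SmithAlgebra.
Variables (f : {poly C}) (A : algType C) (E F H : A).
Hypothesis hA : is_Rf f E F H.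
Local Notation ev := (horner_alg H).

Lemma E_ev p : E * ev p = ev (p \Po ('X - 1)) * E.
Proof. by case: hA => _ hHE _ _; rewrite (horner_alg_shift (d := 1) p) ?polyC1 ?scale1r. Qed.

Lemma F_ev p : F * ev p = ev (p \Po ('X + 1)) * F.
Proof.
by case: hA => _ _ hHF _;
  rewrite (horner_alg_shift (d := -1) p) ?polyCN ?opprK ?polyC1 ?scaleN1r.
Qed.

Lemma EF_FE : E * F = F * E + ev f.
Proof. by case: hA => hEF _ _ _; rewrite -hEF addrC subrK. Qed.

Lemma center_of_commute z : z * E = E * z -> z * F = F * z -> z * H = H * z -> center z.
Proof.
case: hA => _ _ _ [span _] zE zF zH r; have [n [c ->]] := span r; symmetry.
apply: commr_sum => i _; apply: commr_sum => j _; apply: commr_sum => k _.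
rewrite /GRing.comm -scalerAr -scalerAl; congr (_ *: _).
by apply: commrM; [apply: commrM|]; apply: commrX.
Qed.

Lemma casimir_center q : bdiff q = f *+ 2 -> center (F * E *+ 2 + ev q).
Proof.
move=> hq; apply: center_of_commute.
- rewrite mulrDl mulrDr E_ev.
  have -> : ev q = ev f *+ 2 + ev (q \Po ('X - 1)).
    by rewrite -rmorphMn -rmorphD -hq /bdiff subrK.
  by rewrite mulrnAl mulrDl mulrnAl mulrnAr mulrA EF_FE mulrDl mulrnDl addrA.
- rewrite mulrDl mulrDr F_ev.
  have -> : ev (q \Po ('X + 1)) = ev (f \Po ('X + 1)) *+ 2 + ev q.
    have -> : q \Po ('X + 1) = (f \Po ('X + 1)) *+ 2 + q.
      by rewrite -raddfMn /= -hq bdiff_comp_XaddC subrK.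
    by rewrite rmorphD rmorphMn.
  rewrite mulrnAr mulrnAl -mulrA EF_FE mulrDr F_ev mulrnDl.
  by rewrite [in RHS]mulrDl [in RHS]mulrnAl [RHS]addrA.
- have FEH : F * E * H = H * (F * E).
    rewrite -mulrA -{1}[H]horner_algX E_ev (mulrA F) F_ev comp_polyX.
    by rewrite comp_polyB comp_polyX comp_polyC addrK horner_algX mulrA.
  by rewrite mulrDl mulrDr -horner_alg_comm mulrnAl mulrnAr FEH.
Qed.

Variables (a : C) (q : {poly C}).
Hypotheses (ha : a != 0) (hq : bdiff q = f *+ 2).

Lemma ker_eta_Xn_subC k : ker_eta E a (E ^+ k - (a ^+ k)%:A).
Proof.
exists ('X ^+ k - (a ^+ k)%:P); split; first by rewrite !hornerE subrr.
by rewrite rmorphB rmorphXn /= horner_algX horner_algC.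
Qed.

Definition in_ZHK x := exists y, in_ZH H y /\ left_ideal (ker_eta E a) (x - y).

Lemma in_ZHK_ZH x : in_ZH H x -> in_ZHK x.
Proof. by exists x; rewrite subrr; split; last exact: left_ideal0. Qed.

Lemma in_ZHK_ker x : left_ideal (ker_eta E a) x -> in_ZHK x.
Proof. by exists 0; rewrite subr0; split; first exact: in_ZH0. Qed.

Lemma in_ZHKD x y : in_ZHK x -> in_ZHK y -> in_ZHK (x + y).
Proof.
move=> [x' [Zx Kx]] [y' [Zy Ky]]; exists (x' + y'); split; first exact: in_ZHD.
by rewrite opprD addrACA; apply: left_idealD.
Qed.

Lemma in_ZHKMl_ev p x : in_ZHK x -> in_ZHK (ev p * x).
Proof.
move=> [y [Zy Ky]]; exists (ev p * y); split; first exact: in_ZHMl_ev.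
by rewrite -mulrBr; apply: left_idealMl.
Qed.

Lemma in_ZHKZ c x : in_ZHK x -> in_ZHK (c *: x).
Proof.
move=> [y [Zy Ky]]; exists (c%:A * y); split; first exact: in_ZHMl_center (center_scalar c) Zy.
by rewrite -[c *: x]mulr_algl -mulrBr; apply: left_idealMl.
Qed.

Lemma in_ZHK_center_ev_F z p : center z -> in_ZHK (z * ev p * F).
Proof.
(* Modulo A (E - a), F is a^-1 F E, and 2 F E = Om - q(H) with Om central. *)
move=> cz; set Om := F * E *+ 2 + ev q.
have cOm : center Om := casimir_center hq.
have FE : F * E = 2^-1 *: (Om - ev q).
  by rewrite addrK -scaler_nat scalerA mulVf ?pnatr_eq0 // scale1r.
have ZH_FE : in_ZH H (z * ev p * (F * E)).
  have -> : z * ev p * (F * E) = (2^-1 *: (z * Om)) * ev p + (- 2^-1 *: z) * ev (p * q).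
    have zOm : z * ev p * Om = z * Om * ev p by rewrite -!mulrA cOm.
    by rewrite FE -scalerAr mulrBr zOm rmorphM mulrA scalerBr -!scalerAl scaleNr.
  by apply: in_ZHD; apply: in_ZH_center_ev; [apply/centerZ/centerM | apply: centerZ].
have -> : z * ev p * F =
    a^-1 *: (z * ev p * (F * E)) + (- a^-1) *: (z * ev p * F * (E - a%:A)).
  rewrite scaleNr -scalerBr mulrA -mulrBr opprB addrC subrK mulr_algr scalerA.
  by rewrite mulVf // scale1r.
apply: in_ZHKD; apply: in_ZHKZ; first exact: in_ZHK_ZH.
by apply/in_ZHK_ker/left_ideal_mem; have := ker_eta_Xn_subC 1; rewrite !expr1.
Qed.

Lemma in_ZHKMl_F x : in_ZHK x -> in_ZHK (F * x).
Proof.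
move=> [_ [[n [z [cz ->]]] Kx]].
have FZ : F * \sum_(j < n) z j * ev (rising j)
          = \sum_(j < n) z j * ev (rising j \Po ('X + 1)) * F.
  by rewrite mulr_sumr; apply: eq_bigr => j _; rewrite mulrA cz -mulrA F_ev mulrA.
rewrite -[F * x](subrK (F * \sum_(j < n) z j * ev (rising j))) -mulrBr FZ.
apply: in_ZHKD; first exact/in_ZHK_ker/left_idealMl.
apply: big_ind => [|y y'|j _]; [exact/in_ZHK_ZH/in_ZH0 | exact: in_ZHKD |].
exact: in_ZHK_center_ev_F.
Qed.

Lemma in_ZHK_monomial i j k : in_ZHK (F ^+ i * H ^+ j * E ^+ k).
Proof.
rewrite -[_ * E ^+ k](subrK (F ^+ i * H ^+ j * (a ^+ k)%:A)) -mulrBr mulr_algr.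
apply: in_ZHKD; first exact/in_ZHK_ker/left_ideal_mem/ker_eta_Xn_subC.
apply: in_ZHKZ; elim: i => [|i IH]; last by rewrite exprS -mulrA; apply: in_ZHKMl_F.
rewrite expr0 mul1r -[H ^+ j]mulr1 -(horner_algX H) -rmorphXn.
apply/in_ZHKMl_ev/in_ZHK_ZH.
by have := in_ZH_center_ev H 1 (@center1 A); rewrite rmorph1 mulr1.
Qed.

Lemma in_ZHK_all r : in_ZHK r.
Proof.
case: hA => _ _ _ [span _]; have [n [c ->]] := span r.
have ZHK0 : in_ZHK 0 by exact/in_ZHK_ZH/in_ZH0.
apply: big_ind => // [x y|i _]; first exact: in_ZHKD.
apply: big_ind => // [x y|j _]; first exact: in_ZHKD.
apply: big_ind => // [x y|k _]; first exact: in_ZHKD.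
exact/in_ZHKZ/in_ZHK_monomial.
Qed.

End SmithAlgebra.

Section Module.
Variables (A : algType C) (V : lmodType C) (act : A -> V -> V).
Hypothesis hV : is_module act.

Lemma actDl x y v : act (x + y) v = act x v + act y v. Proof. by case: hV. Qed.
Lemma actDr x v u : act x (v + u) = act x v + act x u. Proof. by case: hV. Qed.
Lemma actM x y v : act (x * y) v = act x (act y v). Proof. by case: hV. Qed.
Lemma act1 v : act 1 v = v. Proof. by case: hV. Qed.
Lemma actZl c x v : act (c *: x) v = c *: act x v. Proof. by case: hV. Qed.

Lemma act0l v : act 0 v = 0.
Proof. by rewrite -(scale0r 0) actZl scale0r. Qed.

Lemma act0r x : act x 0 = 0.
Proof. by apply: (addrI (act x 0)); rewrite -actDr !addr0. Qed.

Lemma actBl x y v : act (x - y) v = act x v - act y v.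
Proof. by rewrite actDl -[- y]scaleN1r actZl scaleN1r. Qed.

Lemma actZr x c v : act x (c *: v) = c *: act x v.
Proof.
have -> : c *: v = act c%:A v by rewrite actZl act1.
by rewrite -actM mulr_algr actZl.
Qed.

Lemma act_suml I r (P : pred I) (g : I -> A) v :
  act (\sum_(i <- r | P i) g i) v = \sum_(i <- r | P i) act (g i) v.
Proof. by apply: (big_morph (act^~ v)) => [x y|]; rewrite ?actDl ?act0l. Qed.

Lemma act_horner_alg_eigen (x : A) (c : C) (w : V) p :
  act x w = c *: w -> act (horner_alg x p) w = p.[c] *: w.
Proof.
move=> xw; elim/poly_ind: p => [|p d IH]; first by rewrite rmorph0 act0l horner0 scale0r.
rewrite rmorphD rmorphM /= horner_algX horner_algC actDl actM xw actZr IH actZl act1.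
by rewrite !hornerE scalerA scalerDl mulrC.
Qed.

Lemma left_ideal_ann (S : A -> Prop) (w : V) x :
  (forall s, S s -> act s w = 0) -> left_ideal S x -> act x w = 0.
Proof.
move=> Sw [n [r [s [Ss ->]]]]; rewrite act_suml big1 // => i _.
by rewrite actM Sw ?act0r //; apply: Ss.
Qed.

Section Whittaker.
Variables (f : {poly C}) (E F H : A).
Hypothesis hA : is_Rf f E F H.
Variables (a : C) (w : V).
Hypotheses (ha : a != 0) (hw : act E w = a *: w).
Local Notation ev := (horner_alg H).

Lemma act_Ea_center_ev z p : center z ->
  act ((E - a%:A) * (z * ev p)) w = - a *: act (z * ev (bdiff p)) w.
Proof.
move=> cz; have -> : (E - a%:A) * (z * ev p) = z * ((E - a%:A) * ev p).
  by rewrite !mulrA cz.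
rewrite [LHS]actM [in RHS]actM -actZr; congr (act z _).
rewrite mulrBl (E_ev hA) actBl actM hw actZr mulr_algl actZl /bdiff rmorphB actBl.
by rewrite scalerBr !scaleNr opprK addrC.
Qed.

Lemma in_ZH_ann_coef n (z : nat -> A) : (forall j, center (z j)) ->
  act (\sum_(j < n) z j * ev (rising j)) w = 0 ->
  forall j, (j < n)%N -> act (z j) w = 0.
Proof.
elim: n z => [//|n IH] z cz zw.
have lowered : act (\sum_(j < n) ((- a * j.+1%:R) *: z j.+1) * ev (rising j)) w = 0.
  rewrite -(act0r (E - a%:A)) -zw -actM mulr_sumr big_ord_recl actDl !act_suml.
  rewrite act_Ea_center_ev // rising0 -polyC1 bdiffC rmorph0 mulr0 act0l scaler0 add0r.
  apply: eq_bigr => j _; rewrite lift0.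
  rewrite act_Ea_center_ev // bdiff_rising linearZ /= mulr_algl.
  by rewrite -scalerAr -scalerAl !actZl scalerA.
have {}IH := IH (fun j => (- a * j.+1%:R) *: z j.+1) (fun j => centerZ _ (cz j.+1)) lowered.
have high j : (j < n)%N -> act (z j.+1) w = 0.
  move=> ltjn; have := IH j ltjn; rewrite actZl => /eqP.
  by rewrite scaler_eq0 mulf_eq0 oppr_eq0 pnatr_eq0 (negbTE ha) /= => /eqP.
case=> [_|j]; last exact: high.
move: zw; rewrite big_ord_recl actDl act_suml big1 => [|j _].
  by rewrite rising0 rmorph1 mulr1 addr0.
by rewrite lift0 -cz actM high ?act0r.
Qed.

Lemma in_ZH_ann_left_ideal y : (forall v, exists r, v = act r w) ->
  in_ZH H y -> act y w = 0 -> left_ideal (Z_V act) y.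
Proof.
move=> cyclic [n [z [cz ->]]] yw.
exists n, (fun j => ev (rising j)), z; split=> [j ltjn|]; last first.
  by apply: eq_bigr => j _; rewrite cz.
split=> // v; have [r ->] := cyclic v.
by rewrite -actM -cz actM (in_ZH_ann_coef cz yw) ?act0r.
Qed.

Lemma ker_eta_ann x : ker_eta E a x -> act x w = 0.
Proof.
by move=> [p [pa ->]]; rewrite (act_horner_alg_eigen _ hw) pa scale0r.
Qed.

End Whittaker.
End Module.

Unset Implicit Arguments.

Theorem mainTheorem1
  (f : {poly CC_numClosedField})
  (A : algType CC_numClosedField) (E F H : A)
  (hA : is_Rf f E F H)
  (a : CC_numClosedField) (ha : a != 0)           (* a = eta(E) *)
  (V : lmodType CC_numClosedField) (act : A -> V -> V)
  (hV : is_module act)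
  (w : V)
  (hw : act E w = a *: w)                          (* w is a Whittaker vector *)
  (hcyc : forall v : V, exists r : A, v = act r w) (* V = R w *)
  : forall r : A,
      ann_vec act w r <->
      exists x y : A,
        left_ideal (Z_V act) x /\ left_ideal (ker_eta E a) y /\ r = x + y.
Proof.
have Kw := left_ideal_ann hV (ker_eta_ann hV hw).
move=> r; split=> [rw | [x [y [Zx [Ky ->]]]]]; last first.
  by rewrite /ann_vec (actDl hV) (left_ideal_ann hV _ Zx) ?Kw ?addr0 // => s [].
have [q hq] := backward_antidifference (f *+ 2).
have [y [Zy Ky]] := in_ZHK_all hA ha hq r.
have yw : act y w = 0 by rewrite -[y](subKr r) (actBl hV) rw Kw ?subr0.
exists y, (r - y); split; first exact: (in_ZH_ann_left_ideal hV hA ha hw hcyc Zy yw).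
by split=> //; rewrite addrC subrK.
Qed.
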